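(* Let $\{\xi_i;i\ge1\}$ be i.i.d. standard normal random variables and $S_k=\sum_{i=1}^k\xi_i^2$. Then $$P\left(\left|\frac{S_n}{S_m}-\frac{n}{m}\right|\ge x\right)\le 6\exp\left(-\frac{m^4x^2}{48n^3}\right)$$ for all integers $m\ge1$, $n\ge1$ and real $x>0$ satisfying $m\le n/2$ and $x\le n/m$. *)

From HB Require Import structures.
From mathcomp Require Import all_boot all_order all_algebra.
From mathcomp Require Import all_classical all_reals all_analysis.
Set Implicit Arguments. Unset Strict Implicit. Unset Printing Implicit Defensive.
Import Order.TTheory GRing.Theory Num.Theory.
Local Open Scope classical_set_scope.
Local Open Scope ring_scope.

Definition mutually_independent_RVs d (T : measurableType d) (R : realType)
  (P : probability T R) (X : nat -> {RV P >-> R}) : Prop :=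
  forall (s : seq nat) (B : nat -> set R),
    uniq s -> (forall i, measurable (B i)) ->
    P (\big[setI/setT]_(i <- s) (X i @^-1` B i)) =
      (\prod_(i <- s) P (X i @^-1` B i))%E.

Definition standard_normal_RV d (T : measurableType d) (R : realType)
  (P : probability T R) (X : {RV P >-> R}) : Prop :=
  forall A : set R, measurable A -> distribution P X A = normal_prob 0 1 A.

(* S_k = xi_1^2 + ... + xi_k^2, with the sequence xi_1, xi_2, ... stored as
   X 0, X 1, ... *)
Definition sum_sq d (T : measurableType d) (R : realType)
  (P : probability T R) (X : nat -> {RV P >-> R}) (k : nat) (w : T) : R :=
  \sum_(i < k) (X i w) ^+ 2.

From HB Require Import structures.
From mathcomp Require Import all_boot all_order all_algebra.
From mathcomp Require Import all_classical all_reals all_analysis.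
From mathcomp Require Import ring lra measurable_realfun.
Import Order.TTheory GRing.Theory Num.Theory.
Import HBNNSimple numFieldTopology.Exports.
Local Open Scope classical_set_scope.
Local Open Scope ring_scope.

(* Write S_n = S_m + (S_n - S_m), two independent blocks of squared standard
   normals.  The event |S_n/S_m - n/m| >= x is the union of the events
   {a S_m + b (S_n - S_m) >= 0} for the two pairs
   (a, b) = (m - n - x m, m) and (n - x m - m, -m); both satisfy
   m a + (n - m) b = -x m^2 and |a| <= 2n, |b| <= m.  By Chernoff's bound,
   independence and the Gaussian moment E[exp (s xi^2)] = (1 - 2s)^(-1/2)
   <= exp (s + 4 s^2) for s <= 1/4, each event has probability at most
   exp (-t x m^2 + 20 t^2 m n^2); the choice t = x m / (40 n^2) and n >= 2m
   turn this into exp (-m^4 x^2 / (48 n^3)), so that even 2 instead of 6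
   would do. *)

Lemma sumr_ite_ltn {R : pzRingType} m n (a b : R) (z : nat -> R) : (m <= n)%N ->
  \sum_(i < n) (if (i < m)%N then a else b) * z i =
    a * \sum_(i < m) z i + b * (\sum_(i < n) z i - \sum_(i < m) z i).
Proof.
move=> mn.
have widen : \sum_(i < m) z i = \sum_(i < n | (i < m)%N) z i by exact: big_ord_widen.
rewrite widen (bigID (fun i : 'I_n => (i < m)%N) xpredT z) /= addrC addrK.
rewrite (bigID (fun i : 'I_n => (i < m)%N)) /= !mulr_sumr.
by congr (_ + _); apply: eq_bigr => i; [move=> -> | move/negbTE ->].
Qed.

Lemma ratio_deviation_split {R : realFieldType} (M N x u v : R) :
  0 < M -> 0 <= u -> 0 <= v -> x <= N / M ->
  x <= `|u / v - N / M| <->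
    0 <= M * u - (N + x * M) * v \/ 0 <= (N - x * M) * v - M * u.
Proof.
move=> M_gt0 u_ge0; rewrite le_eqVlt => /predU1P[<- xNM|v_gt0 _].
  (* [u / 0 = 0]: both sides hold, the left one because [x <= N / M]. *)
  rewrite invr0 mulr0 sub0r normrN mulr0 subr0.
  split=> _; last exact: le_trans xNM (ler_norm _).
  by left; rewrite mulr_ge0 // ltW.
have Mv_gt0 : 0 < M * v by rewrite mulr_gt0.
rewrite (_ : u / v - N / M = (M * u - N * v) / (M * v)); last by field; rewrite !gt_eqF.
rewrite ler_normr ler_pdivlMr // lerNr ler_pdivrMr //.
by split=> [/orP[]|[]] h; [left|right|apply/orP; left|apply/orP; right]; lra.
Qed.

Lemma chernoff_exponent_le {R : realFieldType} (M N x a b : R)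
    (t := x * M / (40 * N ^+ 2)) :
  0 < M -> 2 * M <= N -> 0 < x -> M * a + (N - M) * b = - (x * M ^+ 2) ->
  `|a| <= 2 * N -> `|b| <= M ->
  M * (t * a + 4 * (t * a) ^+ 2) + (N - M) * (t * b + 4 * (t * b) ^+ 2) <=
    - (M ^+ 4 * x ^+ 2 / (48 * N ^+ 3)).
Proof.
move=> M_gt0 MN x_gt0 sum_c a_le b_le.
have a2 : a ^+ 2 <= 4 * N ^+ 2.
  by rewrite -real_normK ?num_real //; have := normr_ge0 a; nra.
have b2 : b ^+ 2 <= M ^+ 2.
  by rewrite -real_normK ?num_real //; have := normr_ge0 b; nra.
have N_gt0 : 0 < N by lra.
have t_ge0 : 0 <= t by rewrite /t divr_ge0 ?mulr_ge0 ?sqr_ge0 // ltW.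
have sum_c2 : M * a ^+ 2 + (N - M) * b ^+ 2 <= 5 * M * N ^+ 2.
  have : M * a ^+ 2 <= M * (4 * N ^+ 2) by rewrite ler_wpM2l // ltW.
  have : (N - M) * b ^+ 2 <= (N - M) * M ^+ 2 by rewrite ler_wpM2l //; lra.
  have : 0 <= M * (N * (N - M) + M ^+ 2).
    by rewrite mulr_ge0 ?addr_ge0 ?mulr_ge0 ?sqr_ge0 //; lra.
  lra.
have -> : M * (t * a + 4 * (t * a) ^+ 2) + (N - M) * (t * b + 4 * (t * b) ^+ 2) =
    t * (M * a + (N - M) * b) + 4 * t ^+ 2 * (M * a ^+ 2 + (N - M) * b ^+ 2) by ring.
rewrite sum_c.
apply: le_trans (_ : t * - (x * M ^+ 2) + 4 * t ^+ 2 * (5 * M * N ^+ 2) <= _).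
  by rewrite lerD2l ler_wpM2l // mulr_ge0 // sqr_ge0.
(* [t] minimises [- t x M^2 + 20 t^2 M N^2], with minimum [- x^2 M^3 / (80 N^2)]. *)
have -> : t * - (x * M ^+ 2) + 4 * t ^+ 2 * (5 * M * N ^+ 2) =
    - (x ^+ 2 * M ^+ 3 / (80 * N ^+ 2)) by rewrite /t; field; lra.
rewrite lerN2 (_ : M ^+ 4 * x ^+ 2 / (48 * N ^+ 3) =
    x ^+ 2 * M ^+ 3 / (80 * N ^+ 2) * (5 * M / (3 * N))); last by field; lra.
apply: ler_piMr; first by rewrite !divr_ge0 ?mulr_ge0 ?exprn_ge0 ?ltW.
by rewrite ler_pdivrMr; lra.
Qed.

Lemma invr_sqrt_le_expR {R : realType} (s : R) : s <= 4^-1 ->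
  (Num.sqrt (1 - 2 * s))^-1 <= expR (s + 4 * s ^+ 2).
Proof.
move=> s_le.
have s12 : 0 < 1 - 2 * s by lra.
set c := Num.sqrt (1 - 2 * s).
have c_gt0 : 0 < c by rewrite sqrtr_gt0.
have c2 : c ^+ 2 = 1 - 2 * s by rewrite sqr_sqrtr // ltW.
have e_gt0 : 0 < expR (s + 4 * s ^+ 2) by rewrite expR_gt0.
rewrite -div1r ler_pdivrMr // mulrC.
suff : 1 <= (c * expR (s + 4 * s ^+ 2)) ^+ 2.
  by have := mulr_gt0 c_gt0 e_gt0; nra.
rewrite exprMn c2 expr2 -expRD.
(* [(1 - 2 s) (1 + 2 s + 8 s^2) = 1 + 4 s^2 (1 - 4 s)] *)
apply: le_trans (ler_wpM2l (ltW s12) (expR_ge1Dx _)).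
nra.
Qed.

Section normal.
Context {R : realType}.
Local Notation mu := (@lebesgue_measure R).

Lemma ge0_integral_normal_prob (m s : R) (f : R -> \bar R) :
  measurable_fun [set: R] f -> (forall x, 0 <= f x)%E ->
  (\int[normal_prob m s]_x f x = \int[mu]_x (f x * (normal_pdf m s x)%:E))%E.
Proof.
move=> mf f0.
have nmu := normal_prob_dominates m s.
rewrite -(Radon_Nikodym_SigmaFinite.change_of_variables nmu)//.
apply: ae_eq_integral => //.
- apply: emeasurable_funM => //; apply: measurable_int.
  exact: Radon_Nikodym_SigmaFinite.f_integrable.
- by apply: emeasurable_funM => //; apply/measurable_EFinP; exact: measurable_normal_pdf.
apply: ae_eqe_mul2l; apply: integral_ae_eq => //.
- exact: Radon_Nikodym_SigmaFinite.f_integrable.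
- by apply/measurable_EFinP; exact: measurable_normal_pdf.
by move=> E _ mE; rewrite -Radon_Nikodym_SigmaFinite.f_integral.
Qed.

Lemma integral_normal_prob_expR_sqr (s : R) : s < 2^-1 ->
  (\int[normal_prob 0 1]_x (expR (s * x ^+ 2))%:E =
     (Num.sqrt (1 - 2 * s))^-1%:E)%E.
Proof.
move=> s_lt.
have s12 : 0 < 1 - 2 * s by lra.
set c := Num.sqrt (1 - 2 * s).
have c_gt0 : 0 < c by rewrite sqrtr_gt0.
have c2 : c ^+ 2 = 1 - 2 * s by rewrite sqr_sqrtr // ltW.
have tilt y : expR (s * y ^+ 2) * normal_pdf 0 1 y = c^-1 * normal_pdf 0 c^-1 y.
  rewrite !normal_pdfE ?oner_eq0 ?invr_eq0 ?gt_eqF //.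
  rewrite /normal_peak /normal_fun !subr0 expr1n mul1r exprVn c2.
  rewrite -mulrnAr sqrtrM ?invr_ge0 ?ltW // sqrtrV ?ltW // -/c invfM invrK.
  have -> : - y ^+ 2 / ((1 - 2 * s)^-1 *+ 2) = s * y ^+ 2 + - y ^+ 2 / 2.
    by rewrite -mulr_natr; field; lra.
  rewrite expRD; field.
  by rewrite !gt_eqF // sqrtr_gt0 pmulrn_lgt0 // pi_gt0.
rewrite ge0_integral_normal_prob //; last first.
  by apply: measurableT_comp => //; apply: measurableT_comp => //; exact: measurable_funM.
under eq_integral do rewrite -EFinM tilt EFinM.
rewrite ge0_integralZl //.
- by rewrite integral_normal_pdf mule1.
- by apply/measurable_EFinP; exact: measurable_normal_pdf.
- by move=> y _; rewrite (lee_fin 0) normal_pdf_ge0.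
- by rewrite (lee_fin 0) invr_ge0 ltW.
Qed.

End normal.

Lemma expectation_expR_sqr_normal {d} {T : measurableType d} {R : realType}
    {P : probability T R} (Y : {RV P >-> R}) (s : R) :
  standard_normal_RV Y -> s < 2^-1 ->
  (\int[P]_w (expR (s * Y w ^+ 2))%:E = (Num.sqrt (1 - 2 * s))^-1%:E)%E.
Proof.
move=> Ynormal s_lt.
(* [normal_prob] lives on [measurableTypeR R], whose measurable sets are those of
   [R] but which is a different measurable type; [Y'] is [Y] retyped into it. *)
pose Y' : {mfun T >-> measurableTypeR R} := HB.pack (Y : T -> measurableTypeR R)
  (isMeasurableFun.Build _ _ _ _ (Y : T -> measurableTypeR R) (measurable_funPT Y)).
have mf : measurable_fun [set: measurableTypeR R] (fun y => (expR (s * y ^+ 2))%:E).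
  by apply/measurable_EFinP/measurableT_comp => //; exact: measurable_funM.
rewrite -(ge0_integral_distribution Y' mf); last by move=> y; rewrite lee_fin expR_ge0.
rewrite -integral_normal_prob_expR_sqr //; apply: eq_measure_integral => A mA _.
exact: Ynormal.
Qed.

Lemma indic_bigsetI {T I : Type} {R : pzRingType} (r : seq I) (A : I -> set T) x :
  \1_(\big[setI/setT]_(i <- r) A i) x = \prod_(i <- r) (\1_(A i) x : R).
Proof.
elim: r => [|i r IH]; first by rewrite !big_nil indicT.
by rewrite !big_cons indicI /= IH.
Qed.

Lemma sum_indic_preimage {T : Type} {R : pzRingType} (f : T -> R) (s : seq R) :
  uniq s -> (forall x, f x \in s) ->
  forall x, f x = \sum_(y <- s) y * \1_(f @^-1` [set y]) x.
Proof.
move=> s_uniq fs x; rewrite (bigD1_seq (f x)) //= indicE mem_set // mulr1.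
rewrite big1 ?addr0 // => y yfx; rewrite indicE memNset ?mulr0 //=.
by move=> fxy; move: yfx; rewrite fxy eqxx.
Qed.

Lemma integral_sum_indic {d} {T : measurableType d} {R : realType}
    (mu : {finite_measure set T -> \bar R}) (I : finType) (a : I -> R) (C : I -> set T) :
  (forall j, 0 <= a j) -> (forall j, measurable (C j)) ->
  (\int[mu]_x (\sum_j a j * \1_(C j) x)%:E = (\sum_j a j * fine (mu (C j)))%:E)%E.
Proof.
move=> a_ge0 mC.
under eq_integral do rewrite -sumEFin.
rewrite ge0_integral_sum //; last 2 first.
- by move=> j; apply/measurable_EFinP/measurable_funM => //; exact: measurable_indic.
- by move=> j x _; rewrite lee_fin mulr_ge0.
rewrite -sumEFin; apply: eq_bigr => j _.
under eq_integral do rewrite EFinM.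
rewrite ge0_integralZl //; last 2 first.
- by apply/measurable_EFinP; exact: measurable_indic.
- by rewrite lee_fin.
by rewrite integral_indic // setIT EFinM fineK // fin_num_measure.
Qed.

Section independent_products.
Context {d} {T : measurableType d} {R : realType} {P : probability T R}
  {X : nat -> {RV P >-> R}}.
Hypothesis X_indep : mutually_independent_RVs X.

Lemma mutually_independent_ord n (B : 'I_n -> set R) :
  (forall i, measurable (B i)) ->
  P (\big[setI/setT]_(i < n) X i @^-1` B i) = (\prod_(i < n) P (X i @^-1` B i))%E.
Proof.
move=> mB; pose B' k := oapp B setT (insub k).
have mB' k : measurable (B' k) by rewrite /B'; case: insub => /=.
have B'E (i : 'I_n) : B' i = B i by rewrite /B' valK.
have := X_indep (iota 0 n) B' (iota_uniq 0 n) mB'.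
rewrite -{1 2}(subn0 n) -/(index_iota 0 n) !big_mkord.
under eq_bigr do rewrite B'E.
by under [in RHS]eq_bigr do rewrite B'E.
Qed.

Lemma expectation_prod_sum_indic n K (a : 'I_n -> 'I_K -> R)
    (B : 'I_n -> 'I_K -> set R) :
  (forall i j, 0 <= a i j) -> (forall i j, measurable (B i j)) ->
  (\int[P]_w (\prod_(i < n) \sum_(j < K) a i j * \1_(B i j) (X i w))%:E =
   (\prod_(i < n) \sum_(j < K) a i j * fine (P (X i @^-1` B i j)))%:E)%E.
Proof.
move=> a_ge0 mB.
pose C (i : 'I_n) (j : 'I_K) := X i @^-1` B i j.
have mC i j : measurable (C i j) by exact: measurable_funPTI.
have indicC i j w : \1_(B i j) (X i w) = \1_(C i j) w :> R by [].
under eq_integral => w _.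
  rewrite bigA_distr_bigA.
  under eq_bigr => f _ do
    rewrite big_split /= (eq_bigr _ (fun i _ => indicC i (f i) w)) -indic_bigsetI.
  over.
rewrite integral_sum_indic //; last 2 first.
- by move=> f; apply: prodr_ge0 => i _.
- by move=> f; apply: bigsetI_measurable => i _.
rewrite bigA_distr_bigA; congr EFin; apply: eq_bigr => f _.
rewrite big_split /= mutually_independent_ord //; congr (_ * _).
rewrite (eq_bigr (fun i => (fine (P (C i (f i))))%:E)) ?prodEFin //.
by move=> i _; rewrite fineK // fin_num_measure.
Qed.

Lemma expectation_prod_nnsfun n (g : nat -> {nnsfun R >-> R}) :
  (\int[P]_w (\prod_(i < n) g i (X i w))%:E =
   (\prod_(i < n) fine (\int[P]_w (g i (X i w))%:E))%:E)%E.
Proof.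
have /finite_seqP[s0 s0E] : finite_set (\bigcup_(i in `I_n) range (g i)).
  by apply: bigcup_finite => // i _; exact: fimfunP.
pose s := undup s0.
have gs (i : 'I_n) y : g i y \in s.
  have : (\bigcup_(i in `I_n) range (g i)) (g i y).
    by exists i; [exact: ltn_ord | exists y].
  by rewrite s0E mem_undup.
have s_ge0 j : (j < size s)%N -> 0 <= s`_j.
  move=> j_lt; have : [set` s0] s`_j by rewrite /= -mem_undup mem_nth.
  by rewrite -s0E => -[i _ [y _ <-]].
have gE (i : 'I_n) y :
    g i y = \sum_(j < size s) s`_j * \1_(g i @^-1` [set s`_j]) y.
  by rewrite (sum_indic_preimage (g i) s (undup_uniq s0) (gs i) y) (big_nth 0) big_mkord.
under eq_integral do rewrite (eq_bigr _ (fun i _ => gE i (X i _))).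
rewrite expectation_prod_sum_indic; last 2 first.
- by move=> i j; exact: s_ge0.
- by move=> i j; exact: measurable_funPTI.
congr EFin; apply: eq_bigr => i _.
under eq_integral do rewrite gE.
rewrite integral_sum_indic //.
- by move=> j; exact: s_ge0.
- by move=> j; exact: measurable_funPTI.
Qed.

Lemma expectation_prod_nnsfun_le n (g : nat -> {nnsfun R >-> R}) (b : nat -> R) :
  (forall i, \int[P]_w (g i (X i w))%:E <= (b i)%:E)%E ->
  (\int[P]_w (\prod_(i < n) g i (X i w))%:E <= (\prod_(i < n) b i)%:E)%E.
Proof.
move=> Eg_le; rewrite expectation_prod_nnsfun lee_fin; apply: ler_prod => i _.
have Eg_ge0 : (0 <= \int[P]_w (g i (X i w))%:E)%E.
  by apply: integral_ge0 => w _; rewrite lee_fin.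
rewrite fine_ge0 //= -lee_fin fineK // ge0_fin_numE //.
exact: le_lt_trans (Eg_le i) (ltry _).
Qed.

Lemma expectation_prod_le n (f : nat -> R -> R) (b : nat -> R) :
  (forall i, measurable_fun setT (f i)) -> (forall i y, 0 <= f i y) ->
  (forall i, \int[P]_w (f i (X i w))%:E <= (b i)%:E)%E ->
  (\int[P]_w (\prod_(i < n) f i (X i w))%:E <= (\prod_(i < n) b i)%:E)%E.
Proof.
move=> mf f_ge0 Ef_le.
have mEf i : measurable_fun setT (EFin \o f i) by exact/measurable_EFinP.
have Ef_ge0 i y : setT y -> (0 <= (EFin \o f i) y)%E by rewrite /= lee_fin.
pose g k i := nnsfun_approx measurableT (mEf i) k.
have g_le k i y : g k i y <= f i y.
  by rewrite -lee_fin /g nnsfun_approxE; exact: (le_approx k (Ef_ge0 i)).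
have g_nd i y : nondecreasing_seq (fun k => g k i y).
  by move=> k l kl; exact/lefP/nd_nnsfun_approx.
have g_cvg i y : g k i y @[k --> \oo] --> f i y.
  rewrite /g; under eq_fun do rewrite nnsfun_approxE.
  exact: (cvg_approx (Ef_ge0 i) I (ltry _)).
pose h k w := \prod_(i < n) g k i (X i w).
have h_cvg w : h k w @[k --> \oo] --> \prod_(i < n) f i (X i w).
  by apply: cvg_big => [|i _]; [exact: mul_continuous | exact: g_cvg].
have h_ge0 k w : setT w -> (0 <= (h k w)%:E)%E.
  by move=> _; rewrite lee_fin prodr_ge0.
have h_nd w : setT w -> nondecreasing_seq (fun k => (h k w)%:E).
  by move=> _ k l kl; rewrite lee_fin; apply: ler_prod => i _; rewrite fun_ge0 g_nd.
have mh k : measurable_fun setT (fun w => (h k w)%:E).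
  by apply/measurable_EFinP; apply: measurable_prod => i _; exact: measurableT_comp.
have -> : (\int[P]_w (\prod_(i < n) f i (X i w))%:E =
           \int[P]_w limn (fun k => (h k w)%:E))%E.
  apply: eq_integral => w _; apply/esym/cvg_lim => //.
  exact: (cvg_comp _ _ (h_cvg w)).
apply: cvge_le (cvg_monotone_convergence (mu := P) measurableT mh h_ge0 h_nd).
apply: nearW => k; apply: expectation_prod_nnsfun_le => i.
apply: le_trans (Ef_le i); apply: ge0_le_integral => //.
- by move=> w _; rewrite lee_fin.
- by apply/measurable_EFinP; exact: measurableT_comp.
- by apply/measurable_EFinP; exact: measurableT_comp.
- by move=> w _; rewrite lee_fin g_le.
Qed.

End independent_products.

Section gaussian_quadratic_forms.
Context {d} {T : measurableType d} {R : realType} {P : probability T R}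
  {X : nat -> {RV P >-> R}}.
Hypothesis X_indep : mutually_independent_RVs X.
Hypothesis X_normal : forall i, standard_normal_RV (X i).

Lemma quadratic_form_ge0_prob n (c : nat -> R) (t : R) :
  0 < t -> (forall i, t * c i <= 4^-1) ->
  (P [set w | (0 <= \sum_(i < n) c i * X i w ^+ 2)%R] <=
     (expR (\sum_(i < n) (t * c i + 4 * (t * c i) ^+ 2)))%:E)%E.
Proof.
move=> t_gt0 tc_le.
pose Y : {RV P >-> R} := \sum_(i < n) scale_mfun (c i) (X i ^+ 2).
have YE w : Y w = \sum_(i < n) c i * X i w ^+ 2.
  by rewrite mfun_sum; apply: eq_bigr => i _; rewrite /= mulrC expr2.
under eq_set do rewrite -YE.
apply: le_trans (chernoff Y 0 t_gt0) _.
rewrite mulr0 oppr0 expR0 mule1 /mmt_gen_fun unlock expR_sum.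
under eq_integral do rewrite /= YE mulrC mulr_sumr expR_sum.
apply: (expectation_prod_le X_indep _ (fun i y => expR (t * (c i * y ^+ 2)))
  (fun i => expR (t * c i + 4 * (t * c i) ^+ 2))).
- move=> i; apply: measurableT_comp => //.
  by do 2 apply: measurable_funM => //; exact: measurable_funX.
- by move=> i y; exact: expR_ge0.
- move=> i; under eq_integral do rewrite mulrA.
  rewrite expectation_expR_sqr_normal //; last by have := tc_le i; lra.
  by rewrite lee_fin invr_sqrt_le_expR.
Qed.

Lemma measurable_sum_sq k : measurable_fun setT (sum_sq X k).
Proof. by apply: measurable_sum => i; exact: measurable_funX. Qed.

Lemma measurable_two_block m n (a b : R) :
  measurable [set w | 0 <= a * sum_sq X m w + b * (sum_sq X n w - sum_sq X m w)].
Proof.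
rewrite -preimage_itvcy -[A in measurable A]setTI.
apply: measurable_funD => //; apply: measurable_funM => //.
  exact: measurable_sum_sq.
by apply: measurable_funB; exact: measurable_sum_sq.
Qed.

Lemma ratio_deviation_eventE m n (x : R) : (0 < m)%N -> x <= n%:R / m%:R ->
  [set w | x <= `|sum_sq X n w / sum_sq X m w - n%:R / m%:R|] =
  [set w | 0 <= (m%:R - n%:R - x * m%:R) * sum_sq X m w +
                m%:R * (sum_sq X n w - sum_sq X m w)] `|`
  [set w | 0 <= (n%:R - x * m%:R - m%:R) * sum_sq X m w +
                - m%:R * (sum_sq X n w - sum_sq X m w)].
Proof.
move=> m_gt0 xnm; apply/funext => w; rewrite /setU /= propeqE.
have S_ge0 k : 0 <= sum_sq X k w by apply: sumr_ge0 => i _; exact: sqr_ge0.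
set Sn := sum_sq X n w; set Sm := sum_sq X m w.
have -> : (m%:R - n%:R - x * m%:R) * Sm + m%:R * (Sn - Sm) =
    m%:R * Sn - (n%:R + x * m%:R) * Sm by ring.
have -> : (n%:R - x * m%:R - m%:R) * Sm + - m%:R * (Sn - Sm) =
    (n%:R - x * m%:R) * Sm - m%:R * Sn by ring.
by apply: ratio_deviation_split => //; rewrite ?ltr0n ?S_ge0.
Qed.

Lemma two_block_tail m n (x a b : R) :
  (0 < m)%N -> 2 * m%:R <= n%:R :> R -> 0 < x -> x * m%:R <= n%:R ->
  m%:R * a + (n%:R - m%:R) * b = - (x * m%:R ^+ 2) ->
  `|a| <= 2 * n%:R -> `|b| <= m%:R ->
  (P [set w | (0 <= a * sum_sq X m w + b * (sum_sq X n w - sum_sq X m w))%R] <=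
     (expR (- (m%:R ^+ 4 * x ^+ 2 / (48 * n%:R ^+ 3))))%:E)%E.
Proof.
move=> m_gt0 MN x_gt0 xMN sum_c a_le b_le.
have M_gt0 : 0 < m%:R :> R by rewrite ltr0n.
have mn : (m <= n)%N by rewrite -(ler_nat R); lra.
pose c i := if (i < m)%N then a else b.
pose t := x * m%:R / (40 * n%:R ^+ 2) : R.
have N_gt0 : 0 < n%:R :> R by lra.
have t_gt0 : 0 < t by rewrite /t divr_gt0 ?mulr_gt0 ?exprn_gt0.
have tc i : t * c i <= 4^-1.
  have c_le : c i <= 2 * n%:R.
    by apply: le_trans (ler_norm _) _; rewrite /c; case: ifP => _; lra.
  apply: le_trans (ler_wpM2l (ltW t_gt0) c_le) _.
  have -> : t * (2 * n%:R) = x * m%:R / (20 * n%:R) by rewrite /t; field; lra.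
  by rewrite ler_pdivrMr; lra.
have -> : [set w | 0 <= a * sum_sq X m w + b * (sum_sq X n w - sum_sq X m w)] =
    [set w | 0 <= \sum_(i < n) c i * X i w ^+ 2].
  by apply/funext => w /=; rewrite /c (sumr_ite_ltn _ _ _ _ (fun i => X i w ^+ 2)).
apply: le_trans (quadratic_form_ge0_prob n _ _ t_gt0 tc) _.
rewrite lee_fin ler_expR.
have -> : \sum_(i < n) (t * c i + 4 * (t * c i) ^+ 2) =
    m%:R * (t * a + 4 * (t * a) ^+ 2) + (n%:R - m%:R) * (t * b + 4 * (t * b) ^+ 2).
  rewrite (eq_bigr (fun i : 'I_n => (if (i < m)%N then t * a + 4 * (t * a) ^+ 2
      else t * b + 4 * (t * b) ^+ 2) * 1)); last first.
    by move=> i _; rewrite /c mulr1; case: ifP.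
  by rewrite (sumr_ite_ltn _ _ _ _ (fun=> 1)) // !sumr_const !card_ord; ring.
exact: chernoff_exponent_le.
Qed.

End gaussian_quadratic_forms.

Theorem lemma4p2 (R : realType) (d : measure_display) (T : measurableType d)
  (P : probability T R) (X : nat -> {RV P >-> R})
  (Xind : mutually_independent_RVs X)
  (Xnorm : forall i, standard_normal_RV (X i))
  (m n : nat) (x : R) :
  (1 <= m)%N -> (1 <= n)%N -> 0 < x -> (m%:R <= n%:R / 2 :> R) ->
  x <= n%:R / m%:R ->
  (P [set w | (x <= `| sum_sq X n w / sum_sq X m w - n%:R / m%:R |)%R]
   <= (6 * expR (- ((m%:R) ^+ 4 * x ^+ 2 / (48 * (n%:R) ^+ 3))))%:E)%E.
Proof.
move=> m_gt0 _ x_gt0 mn xnm.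
have M_gt0 : 0 < m%:R :> R by rewrite ltr0n.
have MN : 2 * m%:R <= n%:R :> R by lra.
have xMN : x * m%:R <= n%:R by rewrite -ler_pdivlMr.
have xM_ge0 : 0 <= x * m%:R by rewrite mulr_ge0 // ltW.
have tail a b := two_block_tail Xind Xnorm m n x a b m_gt0 MN x_gt0 xMN.
rewrite ratio_deviation_eventE //.
apply: le_trans (measureU2 _ (measurable_two_block _ _ _ _)
                            (measurable_two_block _ _ _ _)) _.
apply: le_trans (leeD (tail _ _ _ _ _) (tail _ _ _ _ _)) _.
- by ring.
- by rewrite ler_norml; apply/andP; split; lra.
- by rewrite ger0_norm // ltW.
- by ring.
- by rewrite ler_norml; apply/andP; split; lra.
- by rewrite normrN ger0_norm // ltW.
rewrite -EFinD lee_fin.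
by have := expR_ge0 (- (m%:R ^+ 4 * x ^+ 2 / (48 * n%:R ^+ 3))); lra.
Qed.
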